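(* Let ${\bm{x}}_i^m\in\mathbb{R}^d$ ($m\in[M]$, $i\in[n]$) satisfy $\|{\bm{x}}_i^m\|\le1$ and be linearly separable with maximum margin $\gamma=\max_{\|{\bm{w}}\|=1}\min_{m,i}\langle{\bm{w}},{\bm{x}}_i^m\rangle>0$. Let $\ell(z)=\log(1+e^{-z})$, $F_m({\bm{w}})=\frac1n\sum_i\ell(\langle{\bm{w}},{\bm{x}}_i^m\rangle)$, $F=\frac1M\sum_mF_m$. Run Local GD with any ${\bm{w}}_0$, $\eta>0$, $K\in\mathbb{N}$: ${\bm{w}}_{r,0}^m={\bm{w}}_r$, ${\bm{w}}_{r,k+1}^m={\bm{w}}_{r,k}^m-\eta\nabla F_m({\bm{w}}_{r,k}^m)$ ($k=0,\dots,K-1$), ${\bm{w}}_{r+1}=\frac1M\sum_m{\bm{w}}_{r,K}^m$. Define $${\bm{b}}_r=\frac1{MK}\sum_{m=1}^M\sum_{k=0}^{K-1}\big(\nabla F_m({\bm{w}}_{r,k}^m)-\nabla F_m({\bm{w}}_r)\big).$$ If $F({\bm{w}}_r)\le\gamma/(70\eta KM)$, then $\|{\bm{b}}_r\|\le\frac15\|\nabla F({\bm{w}}_r)\|$.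
   Context: Linear separability means there is ${\bm{w}}$ with $\langle{\bm{w}},{\bm{x}}_i^m\rangle>0$ for all $m,i$ (labels absorbed into data). Note ${\bm{w}}_{r+1}-{\bm{w}}_r=-\eta K(\nabla F({\bm{w}}_r)+{\bm{b}}_r)$. *)

From HB Require Import structures.
From mathcomp Require Import all_boot all_order all_algebra.
From mathcomp Require Import all_classical all_reals all_analysis.
Set Implicit Arguments. Unset Strict Implicit. Unset Printing Implicit Defensive.
Import Order.TTheory GRing.Theory Num.Theory.
Import numFieldNormedType.Exports.
Local Open Scope ring_scope.

Section Defs.
Variable R : realType.
Variable d : nat.
Notation vec := 'rV[R]_d.

Definition dotv (u v : vec) : R := \sum_(j < d) u 0 j * v 0 j.
Definition enorm (u : vec) : R := Num.sqrt (dotv u u).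

Definition grad (f : vec -> R) (w : vec) : vec :=
  \row_(j < d) derive f w (delta_mx 0 j : vec).

Definition logistic (z : R) : R := ln (1 + expR (- z)).

Definition Floc (n : nat) (xs : 'I_n -> vec) (w : vec) : R :=
  n%:R^-1 * \sum_(i < n) logistic (dotv w (xs i)).

Definition Fglob (M n : nat) (x : 'I_M -> 'I_n -> vec) (w : vec) : R :=
  M%:R^-1 * \sum_(m < M) Floc (x m) w.

Definition local_iter (n : nat) (xs : 'I_n -> vec) (eta : R) (k : nat) (w : vec)
  : vec := iter k (fun v => v - eta *: grad (Floc xs) v) w.

Definition round (M n : nat) (x : 'I_M -> 'I_n -> vec) (eta : R) (K : nat)
  (w : vec) : vec :=
  M%:R^-1 *: \sum_(m < M) local_iter (x m) eta K w.

Definition localGD (M n : nat) (x : 'I_M -> 'I_n -> vec) (eta : R) (K : nat)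
  (w0 : vec) (r : nat) : vec := iter r (round x eta K) w0.

Definition bias (M n : nat) (x : 'I_M -> 'I_n -> vec) (eta : R) (K : nat)
  (w0 : vec) (r : nat) : vec :=
  (M%:R * K%:R)^-1 *:
    \sum_(m < M) \sum_(k < K)
      (grad (Floc (x m)) (local_iter (x m) eta k (localGD x eta K w0 r))
       - grad (Floc (x m)) (localGD x eta K w0 r)).

Definition is_max_margin (M n : nat) (x : 'I_M -> 'I_n -> vec) (gamma : R) :=
  (exists w : vec, enorm w = 1 /\ forall m i, gamma <= dotv w (x m i)) /\
  (forall w : vec, enorm w = 1 -> exists m i, dotv w (x m i) <= gamma).

End Defs.

From HB Require Import structures.
From mathcomp Require Import all_boot all_order all_algebra.
From mathcomp Require Import all_classical all_reals all_analysis.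
From mathcomp Require Import ring lra.
Import Order.TTheory GRing.Theory Num.Theory.
Import numFieldNormedType.Exports.
Set Implicit Arguments.
Unset Strict Implicit.
Unset Printing Implicit Defensive.
Local Open Scope ring_scope.

(* Write sigm z = 1 / (1 + e^z) = - logistic'(z) and G_m(w) = (1/n) sum_i sigm <w, x_i^m>,
   so that grad F_m(w) = -(1/n) sum_i sigm <w, x_i^m> x_i^m.  Since sigm <= logistic,
   G_m(w_r) <= F_m(w_r) <= M F(w_r) <= gamma / (70 eta K).  For |a - b| <= 1/2 the ratio
   sigm a / sigm b lies within 1 +- 2 |a - b|; hence along the K local steps
   |grad F_m| <= 2 G_m(w_r), the local iterates stay within 2 K eta G_m(w_r) <= gamma/35
   of w_r, and every gradient difference in b_r is at most 2 (gamma/35) G_m(w_r).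
   So |b_r| <= (2 gamma / 35) G(w_r) for the average G of the G_m, while testing
   grad F(w_r) against a unit max-margin direction gives |grad F(w_r)| >= gamma G(w_r). *)

Section Sigmoid.
Variable R : realType.
Implicit Types a b c t z : R.

Definition sigm z : R := (1 + expR z)^-1.

Lemma sigm_gt0 z : 0 < sigm z.
Proof. by rewrite /sigm invr_gt0; have := expR_gt0 z; lra. Qed.

Lemma logistic_ge0 z : 0 <= logistic z.
Proof. by rewrite /logistic ln_ge0 // lerDl expR_ge0. Qed.

Lemma is_derive_logistic c : is_derive c 1 (@logistic R) (- sigm c).
Proof.
apply: is_derive_eq.
apply: (@is_derive1_comp _ (@ln R) (fun z => 1 + expR (- z))).
  by apply: is_derive1_ln; rewrite ltr_pwDl // expR_ge0.
rewrite /sigm expRN add0r mul1r mulrN1 mulrN; congr (- _).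
have ec := expR_gt0 c; field; apply/andP; split; rewrite gt_eqF //; lra.
Qed.

(* [ln (1 + u) >= u / (1 + u)] with [u = e^-z] *)
Lemma sigm_le_logistic z : sigm z <= logistic z.
Proof.
rewrite /logistic /sigm; set u := expR (- z).
have u0 : 0 < u by apply: expR_gt0.
have -> : (1 + expR z)^-1 = u / (1 + u).
  rewrite -[z]opprK expRN -/u.
  by field; apply/andP; split; apply: lt0r_neq0; lra.
have gt_m1 : -1 < - (u / (1 + u)) by rewrite ltrN2 ltr_pdivrMr; lra.
have := le_ln1Dx gt_m1.
have -> : 1 - u / (1 + u) = (1 + u)^-1 by field; lra.
by rewrite lnV ?posrE ?lerN2 //; lra.
Qed.

Lemma norm_expR_sub1_le t : `|t| <= 2^-1 -> `|expR t - 1| <= 2 * `|t|.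
Proof.
move=> ht.
have E0 := expR_gt0 t; have E1 := expR_ge1Dx t; have F1 := expR_ge1Dx (- t).
have EF : expR t * expR (- t) = 1 by rewrite -expRD subrr expR0.
set E := expR t in E0 E1 EF *; set F := expR (- t) in F1 EF *.
have E_le : E * (1 - t) <= 1 by nra.
have [t0|t0] := lerP 0 t.
  by move: ht; rewrite !ger0_norm //; [nra | lra].
by rewrite (ltr0_norm t0) ler0_norm; nra.
Qed.

Lemma norm_sigm_sub_le a b :
  `|a - b| <= 2^-1 -> `|sigm a - sigm b| <= 2 * `|a - b| * sigm b.
Proof.
move=> hab.
have ea := expR_gt0 a; have ed := expR_gt0 (b - a).
set q := expR a / (1 + expR a).
have q0 : 0 <= q by apply: divr_ge0; lra.
have q1 : q <= 1 by rewrite /q ler_pdivrMr; lra.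
have -> : sigm a - sigm b = q * (expR (b - a) - 1) * sigm b.
  rewrite /sigm /q; have -> : expR b = expR (b - a) * expR a.
    by rewrite -expRD subrK.
  by field; apply/andP; split; apply: lt0r_neq0; nra.
rewrite normrM (gtr0_norm (sigm_gt0 b)) normrM (ger0_norm q0) ler_pM2r ?sigm_gt0 //.
apply: le_trans (ler_piMl _ q1) _; first exact: normr_ge0.
by rewrite (distrC a); apply: norm_expR_sub1_le; rewrite distrC.
Qed.

Lemma sigm_le2 a b : `|a - b| <= 2^-1 -> sigm a <= 2 * sigm b.
Proof.
move=> hab; have := norm_sigm_sub_le hab; have := sigm_gt0 b.
rewrite ler_norml => sb /andP[_ H].
have : 2 * `|a - b| * sigm b <= sigm b by rewrite -mulrA; nra.
lra.
Qed.

End Sigmoid.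

Section Euclid.
Variables (R : realType) (d : nat).
Notation vec := 'rV[R]_d.
Implicit Types u v x : vec.

Lemma dotv0l x : dotv 0 x = 0.
Proof. by rewrite /dotv big1 // => j _; rewrite mxE mul0r. Qed.

Lemma dotvC u v : dotv u v = dotv v u.
Proof. by apply: eq_bigr => j _; rewrite mulrC. Qed.

Lemma dotvDl u v x : dotv (u + v) x = dotv u x + dotv v x.
Proof. by rewrite /dotv -big_split; apply: eq_bigr => j _; rewrite mxE mulrDl. Qed.

Lemma dotvZl (a : R) u x : dotv (a *: u) x = a * dotv u x.
Proof. by rewrite /dotv mulr_sumr; apply: eq_bigr => j _; rewrite mxE mulrA. Qed.

Lemma dotvNl u x : dotv (- u) x = - dotv u x.
Proof. by rewrite -scaleN1r dotvZl mulN1r. Qed.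

Lemma dotvBl u v x : dotv (u - v) x = dotv u x - dotv v x.
Proof. by rewrite dotvDl dotvNl. Qed.

Lemma dotvDr u v x : dotv x (u + v) = dotv x u + dotv x v.
Proof. by rewrite dotvC dotvDl !(dotvC x). Qed.

Lemma dotvZr (a : R) u x : dotv x (a *: u) = a * dotv x u.
Proof. by rewrite dotvC dotvZl dotvC. Qed.

Lemma dotvNr u x : dotv x (- u) = - dotv x u.
Proof. by rewrite dotvC dotvNl dotvC. Qed.

Lemma dotv_suml I (s : seq I) (P : pred I) (F : I -> vec) x :
  dotv (\sum_(i <- s | P i) F i) x = \sum_(i <- s | P i) dotv (F i) x.
Proof. by elim/big_rec2: _ => [|i y1 y2 _ <-]; rewrite ?dotv0l ?dotvDl. Qed.

Lemma dotv_deltal j x : dotv (delta_mx 0 j) x = x 0 j.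
Proof.
rewrite /dotv (bigD1 j) //= big1 ?addr0; first by rewrite mxE !eqxx mul1r.
by move=> k /negbTE kj; rewrite mxE kj andbF mul0r.
Qed.

Lemma dotvv_ge0 u : 0 <= dotv u u.
Proof. by apply: sumr_ge0 => j _; rewrite -expr2 sqr_ge0. Qed.

Lemma enorm_ge0 u : 0 <= enorm u.
Proof. exact: sqrtr_ge0. Qed.

Lemma enorm_sqr u : enorm u ^+ 2 = dotv u u.
Proof. by rewrite sqr_sqrtr // dotvv_ge0. Qed.

Lemma enorm_eq0 u : enorm u = 0 -> u = 0.
Proof.
move=> u0; have uu0 : dotv u u = 0 by rewrite -enorm_sqr u0 expr0n.
have sq0 := psumr_eq0P (fun j _ => sqr_ge0 (u 0 j)) uu0.
by apply/rowP => j; rewrite mxE; apply/eqP; rewrite -sqrf_eq0 sq0.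
Qed.

Lemma enorm0 : enorm (0 : vec) = 0.
Proof. by rewrite /enorm dotv0l sqrtr0. Qed.

Lemma enormN u : enorm (- u) = enorm u.
Proof. by rewrite /enorm dotvNl dotvNr opprK. Qed.

Lemma enormZ (a : R) u : enorm (a *: u) = `|a| * enorm u.
Proof.
by rewrite /enorm dotvZl dotvZr mulrA -expr2 sqrtrM ?sqr_ge0 // sqrtr_sqr.
Qed.

(* [0 <= | |v| u - |u| v |^2 = 2 |u| |v| (|u| |v| - <u, v>)] *)
Lemma dotv_le_enorm u v : dotv u v <= enorm u * enorm v.
Proof.
have [/enorm_eq0->|u0] := eqVneq (enorm u) 0; first by rewrite dotv0l enorm0 mul0r.
have [/enorm_eq0->|v0] := eqVneq (enorm v) 0.
  by rewrite dotvC dotv0l enorm0 mulr0.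
have up : 0 < enorm u by rewrite lt_def u0 enorm_ge0.
have vp : 0 < enorm v by rewrite lt_def v0 enorm_ge0.
have := dotvv_ge0 (enorm v *: u - enorm u *: v).
rewrite !(dotvDl, dotvDr, dotvNl, dotvNr, dotvZl, dotvZr) -!enorm_sqr (dotvC v u).
move: up vp; set a := enorm u; set b := enorm v; set c := dotv u v => up vp H.
have ab0 : 0 < a * b by apply: mulr_gt0.
have : 0 <= (a * b) * (a * b - c) by nra.
by rewrite pmulr_rge0 // subr_ge0.
Qed.

Lemma norm_dotv_le u v : `|dotv u v| <= enorm u * enorm v.
Proof.
rewrite ler_norml dotv_le_enorm andbT lerNl -dotvNl -(enormN u).
exact: dotv_le_enorm.
Qed.

Lemma enormD u v : enorm (u + v) <= enorm u + enorm v.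
Proof.
rewrite -(ger0_norm (addr_ge0 (enorm_ge0 u) (enorm_ge0 v))) -sqrtr_sqr.
apply: ler_wsqrtr.
rewrite !(dotvDl, dotvDr) (dotvC v u) sqrrD -!enorm_sqr.
by have := dotv_le_enorm u v; lra.
Qed.

Lemma enorm_sum I (s : seq I) (P : pred I) (F : I -> vec) :
  enorm (\sum_(i <- s | P i) F i) <= \sum_(i <- s | P i) enorm (F i).
Proof.
elim/big_rec2: _ => [|i y1 y2 _ H]; first by rewrite enorm0.
by apply: le_trans (enormD _ _) _; rewrite lerD2l.
Qed.

End Euclid.

Section Gradient.
Variables (R : realType) (d : nat).
Notation vec := 'rV[R]_d.

Lemma derive_along_line (f : vec -> R) x v :
  derive f x v = derive (fun h : R => f (h *: v + x)) 0 1.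
Proof.
rewrite /derive; set g1 := fun h => h^-1 *: _; set g2 := fun h => h^-1 *: _.
suff -> : g1 = g2 by [].
by rewrite funeqE /g1 /g2 => h /=; rewrite addr0 scale0r add0r [_%:A]mulr1.
Qed.

Lemma is_derive_along_line (f : vec -> R) x v df :
  is_derive (0 : R) 1 (fun h : R => f (h *: v + x)) df -> is_derive x v f df.
Proof. by case=> g1 <-; split; [exact/derivable1P | rewrite derive_along_line]. Qed.

Lemma is_derive_logistic_dotv (w xi : vec) j :
  is_derive w (delta_mx 0 j) (fun v => logistic (dotv v xi))
    (- sigm (dotv w xi) * xi 0 j).
Proof.
apply: is_derive_along_line.
have -> : (fun h : R => logistic (dotv (h *: delta_mx 0 j + w) xi))
    = @logistic R \o (fun h => h * xi 0 j + dotv w xi).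
  by apply/funext => h /=; rewrite dotvDl dotvZl dotv_deltal.
apply: is_derive1_comp; first by rewrite mul0r add0r; exact: is_derive_logistic.
have -> : (fun h : R => h * xi 0 j + dotv w xi) = xi 0 j \*: id + cst (dotv w xi).
  by apply/funext => h /=; rewrite mulrC.
by apply: is_derive_eq; rewrite /= addr0 scaler1.
Qed.

Lemma is_derive_Floc n (xs : 'I_n -> vec) w j :
  is_derive w (delta_mx 0 j) (Floc xs)
    ((- (n%:R^-1 *: \sum_(i < n) sigm (dotv w (xs i)) *: xs i)) 0 j).
Proof.
have -> : Floc xs = n%:R^-1 \*: \sum_(i < n) (fun v => logistic (dotv v (xs i))).
  by apply/funext => v; rewrite /Floc /= fct_sumE.
apply: is_derive_eq.
  by apply: is_deriveZ; apply: is_derive_sum => i; exact: is_derive_logistic_dotv.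
rewrite !mxE summxE mulr_sumr -sumrN scaler_sumr; apply: eq_bigr => i _.
by rewrite !mxE mulNr; apply: mulrN.
Qed.

Lemma grad_Floc n (xs : 'I_n -> vec) w :
  grad (Floc xs) w = - (n%:R^-1 *: \sum_(i < n) sigm (dotv w (xs i)) *: xs i).
Proof. by apply/rowP => j; rewrite mxE; have [_ ->] := is_derive_Floc xs w j. Qed.

Lemma grad_Fglob M n (x : 'I_M -> 'I_n -> vec) w :
  grad (Fglob x) w = M%:R^-1 *: \sum_(m < M) grad (Floc (x m)) w.
Proof.
apply/rowP => j; rewrite mxE.
have -> : Fglob x = M%:R^-1 \*: \sum_(m < M) Floc (x m).
  by apply/funext => v; rewrite /Fglob /= fct_sumE.
have [_ ->] := is_deriveZ (M%:R^-1) (is_derive_sum (fun m => is_derive_Floc (x m) w j)).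
by rewrite !mxE summxE; congr (_ * _); apply: eq_bigr => m _; rewrite grad_Floc.
Qed.

End Gradient.

Section LocalSteps.
Variables (R : realType) (d n : nat) (xs : 'I_n -> 'rV[R]_d).
Hypothesis xs_le1 : forall i, enorm (xs i) <= 1.
Notation vec := 'rV[R]_d.

Definition Gloc (w : vec) : R := n%:R^-1 * \sum_(i < n) sigm (dotv w (xs i)).

Lemma Gloc_ge0 w : 0 <= Gloc w.
Proof.
by rewrite mulr_ge0 ?invr_ge0 ?ler0n ?sumr_ge0 // => i _; rewrite ltW ?sigm_gt0.
Qed.

Lemma Gloc_le_Floc w : Gloc w <= Floc xs w.
Proof.
by rewrite ler_wpM2l ?invr_ge0 ?ler0n // ler_sum // => i _; apply: sigm_le_logistic.
Qed.

Lemma enorm_avg_le (c : 'I_n -> R) :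
  enorm (n%:R^-1 *: \sum_(i < n) c i *: xs i) <= n%:R^-1 * \sum_(i < n) `|c i|.
Proof.
rewrite enormZ ger0_norm ?invr_ge0 ?ler0n // ler_wpM2l ?invr_ge0 ?ler0n //.
apply: le_trans (enorm_sum _ _ _) _; apply: ler_sum => i _.
by rewrite enormZ ler_piMr // xs_le1.
Qed.

Lemma norm_dotv_sub_le v w i : `|dotv v (xs i) - dotv w (xs i)| <= enorm (v - w).
Proof.
rewrite -dotvBl; apply: le_trans (norm_dotv_le _ _) _.
by rewrite ler_piMr ?enorm_ge0.
Qed.

Lemma enorm_grad_Floc_le v w :
  enorm (v - w) <= 2^-1 -> enorm (grad (Floc xs) v) <= 2 * Gloc w.
Proof.
move=> vw; rewrite grad_Floc enormN; apply: le_trans (enorm_avg_le _) _.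
rewrite /Gloc mulrCA ler_wpM2l ?invr_ge0 ?ler0n // mulr_sumr.
apply: ler_sum => i _; rewrite gtr0_norm ?sigm_gt0 //.
exact/sigm_le2/(le_trans (norm_dotv_sub_le v w i)).
Qed.

Lemma enorm_grad_Floc_sub_le v w : enorm (v - w) <= 2^-1 ->
  enorm (grad (Floc xs) v - grad (Floc xs) w) <= 2 * enorm (v - w) * Gloc w.
Proof.
move=> vw; rewrite !grad_Floc -opprD enormN -scalerBr -sumrB.
under eq_bigr do rewrite -scalerBl.
apply: le_trans (enorm_avg_le _) _.
rewrite /Gloc mulrCA ler_wpM2l ?invr_ge0 ?ler0n // mulr_sumr.
apply: ler_sum => i _; have vwi := norm_dotv_sub_le v w i.
apply: le_trans (norm_sigm_sub_le (le_trans vwi vw)) _.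
by rewrite ler_wpM2r ?ler_wpM2l // ltW ?sigm_gt0.
Qed.

Lemma enorm_local_iter_sub_le (eta : R) K w : 0 < eta ->
  2 * K%:R * (eta * Gloc w) <= 2^-1 ->
  forall k, (k <= K)%N ->
  enorm (local_iter xs eta k w - w) <= 2 * k%:R * (eta * Gloc w).
Proof.
move=> eta0 radius; elim=> [|k IH] kK.
  by rewrite /local_iter subrr enorm0 mulr0 mul0r.
have {}IH := IH (ltnW kK).
have G0 : 0 <= eta * Gloc w by rewrite mulr_ge0 ?Gloc_ge0 ?ltW.
have near : enorm (local_iter xs eta k w - w) <= 2^-1.
  apply: le_trans IH (le_trans _ radius).
  by rewrite ler_wpM2r // ler_wpM2l // ler_nat ltnW.
have step := enorm_grad_Floc_le near.
rewrite /local_iter iterS -/(local_iter xs eta k w) addrAC.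
apply: le_trans (enormD _ _) _; rewrite enormN enormZ gtr0_norm // -natr1.
have : eta * enorm (grad (Floc xs) (local_iter xs eta k w)) <= eta * (2 * Gloc w).
  exact: ler_wpM2l (ltW eta0) _ _ step.
nra.
Qed.

Lemma enorm_local_iter_sub_le_radius (eta : R) K w delta : 0 < eta ->
  2 * K%:R * (eta * Gloc w) <= delta -> delta <= 2^-1 ->
  forall k, (k <= K)%N -> enorm (local_iter xs eta k w - w) <= delta.
Proof.
move=> eta0 radius delta_le k kK.
apply: le_trans (enorm_local_iter_sub_le eta0 (le_trans radius delta_le) kK) _.
apply: le_trans radius; apply: ler_wpM2r; first by rewrite mulr_ge0 ?Gloc_ge0 // ltW.
by rewrite ler_wpM2l // ler_nat.
Qed.

End LocalSteps.

Section Rounds.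
Variables (R : realType) (d M n : nat) (x : 'I_M -> 'I_n -> 'rV[R]_d).
Hypothesis M_gt0 : (0 < M)%N.
Notation vec := 'rV[R]_d.

Definition Gglob (w : vec) : R := M%:R^-1 * \sum_(m < M) Gloc (x m) w.

Lemma Gglob_ge0 w : 0 <= Gglob w.
Proof.
by rewrite mulr_ge0 ?invr_ge0 ?ler0n ?sumr_ge0 // => m _; apply: Gloc_ge0.
Qed.

Lemma Gloc_le_Fglob m w : Gloc (x m) w <= M%:R * Fglob x w.
Proof.
rewrite mulrA mulfV ?pnatr_eq0 -?lt0n // mul1r (bigD1 m) //=.
apply: le_trans (Gloc_le_Floc _ _) _; rewrite lerDl sumr_ge0 // => m' _.
by rewrite mulr_ge0 ?invr_ge0 ?ler0n ?sumr_ge0 // => i _; apply: logistic_ge0.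
Qed.

Lemma margin_Gglob_le_enorm_grad u gamma w : enorm u = 1 ->
  (forall m i, gamma <= dotv u (x m i)) ->
  gamma * Gglob w <= enorm (grad (Fglob x) w).
Proof.
move=> u1 margin; apply: le_trans (_ : dotv (- grad (Fglob x) w) u <= _); last first.
  by apply: le_trans (dotv_le_enorm _ _) _; rewrite enormN u1 mulr1.
rewrite grad_Fglob dotvNl -dotvNl -scalerN dotvZl mulrCA ler_wpM2l ?invr_ge0 ?ler0n //.
rewrite -sumrN dotv_suml mulr_sumr; apply: ler_sum => m _.
rewrite grad_Floc opprK dotvZl mulrCA ler_wpM2l ?invr_ge0 ?ler0n //.
rewrite dotv_suml mulr_sumr; apply: ler_sum => i _.
by rewrite dotvZl mulrC (dotvC _ u) ler_wpM2l ?margin // ltW ?sigm_gt0.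
Qed.

Hypothesis x_le1 : forall m i, enorm (x m i) <= 1.

Lemma enorm_bias_le (eta : R) K w0 r (delta : R) : (0 < K)%N -> delta <= 2^-1 ->
  (forall m (k : 'I_K), enorm (local_iter (x m) eta k (localGD x eta K w0 r)
                                - localGD x eta K w0 r) <= delta) ->
  enorm (bias x eta K w0 r) <= 2 * delta * Gglob (localGD x eta K w0 r).
Proof.
set w := localGD x eta K w0 r; move=> K_gt0 delta_le near.
have MK0 : 0 < M%:R * K%:R :> R by rewrite mulr_gt0 ?ltr0n.
rewrite /bias -/w enormZ ger0_norm ?invr_ge0 ?(ltW MK0) //.
apply: (@le_trans _ _ ((M%:R * K%:R)^-1 *
    \sum_(m < M) \sum_(k < K) (2 * delta * Gloc (x m) w))).
  rewrite ler_wpM2l ?invr_ge0 ?(ltW MK0) //.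
  apply: le_trans (enorm_sum _ _ _) _; apply: ler_sum => m _.
  apply: le_trans (enorm_sum _ _ _) _; apply: ler_sum => k _.
  apply: le_trans (enorm_grad_Floc_sub_le (x_le1 m) (le_trans (near m k) delta_le)) _.
  by rewrite ler_wpM2r ?Gloc_ge0 // ler_wpM2l.
have -> : \sum_(m < M) \sum_(k < K) (2 * delta * Gloc (x m) w)
    = K%:R * (2 * delta * \sum_(m < M) Gloc (x m) w).
  rewrite !mulr_sumr; apply: eq_bigr => m _.
  by rewrite sumr_const card_ord [RHS]mulr_natl.
rewrite [X in X <= _](_ : _ = 2 * delta * Gglob w) // /Gglob.
by field; rewrite !pnatr_eq0 -!lt0n M_gt0 K_gt0.
Qed.

End Rounds.

Theorem lemma4p8 (R : realType) (d M n : nat) (x : 'I_M -> 'I_n -> 'rV[R]_d)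
  (gamma eta : R) (K : nat) (w0 : 'rV[R]_d) (r : nat) :
  (0 < M)%N -> (0 < n)%N -> (0 < K)%N ->
  (forall m i, enorm (x m i) <= 1) ->
  is_max_margin x gamma -> 0 < gamma ->
  0 < eta ->
  Fglob x (localGD x eta K w0 r) <= gamma / (70 * eta * K%:R * M%:R) ->
  enorm (bias x eta K w0 r) <= 5^-1 * enorm (grad (Fglob x) (localGD x eta K w0 r)).
Proof.
move=> M_gt0 n_gt0 K_gt0 x_le1 [[u [u1 margin]] _] gamma_gt0 eta_gt0 small_loss.
set w := localGD x eta K w0 r in small_loss *.
have gamma_le1 : gamma <= 1.
  apply: le_trans (margin (Ordinal M_gt0) (Ordinal n_gt0)) _.
  by apply: le_trans (dotv_le_enorm _ _) _; rewrite u1 mul1r x_le1.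
have gamma_small : gamma / 35 <= 2^-1 by lra.
have radius m : 2 * K%:R * (eta * Gloc (x m) w) <= gamma / 35.
  have <- : 2 * K%:R * (eta * (M%:R * (gamma / (70 * eta * K%:R * M%:R))))
      = gamma / 35 by field; rewrite ?gt_eqF ?ltr0n.
  rewrite !ler_pM2l ?mulr_gt0 ?ltr0n //.
  by apply: le_trans (Gloc_le_Fglob x M_gt0 m w) _; rewrite ler_pM2l ?ltr0n.
have near m (k : 'I_K) : enorm (local_iter (x m) eta k w - w) <= gamma / 35.
  apply: (enorm_local_iter_sub_le_radius (x_le1 m) eta_gt0 (radius m) gamma_small).
  exact: ltnW.
apply: le_trans (enorm_bias_le M_gt0 x_le1 K_gt0 gamma_small near) _.
have := margin_Gglob_le_enorm_grad w u1 margin; have := Gglob_ge0 x w; nra.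
Qed.
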